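(* The value function $v$ is decreasing on $[0,\infty)$, satisfies $\frac{\beta u_0-1}{r}\le v(z)\le \frac{\beta u_0}{r}$ for all $z\ge 0$, and $\lim_{z\to\infty} v(z)=\frac{\beta u_0-1}{r}$.
   Context: Let $(\Omega,\mathcal F,\mathbb P)$ be a complete probability space carrying a standard Brownian motion $W=(W(t))_{t\ge0}$. Fix parameters $\mu\in\mathbb R$, $\sigma>0$, a maximal dividend rate $u_0>0$, a discount rate $r>0$, a weight $\beta>0$ and a critical drawdown level $d>0$. Let $\mathcal U$ be the set of adapted processes $U=(U(t))_{t\ge0}$ with $0\le U(t)\le u_0$ for all $t$ (admissible dividend strategies). For $U\in\mathcal U$ put $X^U(t)=\mu t+\sigma W(t)-\int_0^t U(s)\,ds$; for $z\ge0$ put $M_z^U(t)=\max\{z,\sup_{s\in[0,t]}X^U(s)\}$ and $\Delta_z^U(t)=M_z^U(t)-X^U(t)$ (the drawdown process with initial past maximum $z$). Define $v^U(z)=\mathbb E\big[\beta\int_0^\infty e^{-rt}U(t)\,dt-\int_0^\infty e^{-rt}\mathbf 1_{\{\Delta_z^U(t)>d\}}\,dt\big]$ and the value function $v(z)=\sup_{U\in\mathcal U}v^U(z)$, $z\ge0$. *)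

From HB Require Import structures.
From mathcomp Require Import all_boot all_order all_algebra.
From mathcomp Require Import all_classical all_reals all_analysis.
Set Implicit Arguments. Unset Strict Implicit. Unset Printing Implicit Defensive.
Import Order.TTheory GRing.Theory Num.Theory.
Import numFieldNormedType.Exports.
Local Open Scope classical_set_scope.
Local Open Scope ring_scope.

Section dividend_drawdown.
Context {R : realType} {dO : measure_display} {Omega : measurableType dO}.
Variable P : probability Omega R.

(* Standard Brownian motion W : [0,oo) x Omega -> R (times t < 0 are
   irrelevant): W 0 = 0, continuous paths on [0,oo), each W t a random
   variable, increments W t - W s (0 <= s < t) are N(0, t - s)-distributed,
   and increments over consecutive disjoint intervals are mutually
   independent. *)
Definition std_brownian_motion (W : R -> Omega -> R) : Prop :=
  [/\ (forall w, W 0 w = 0),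
      (forall w, {within `[0, +oo[%classic, continuous (fun t => W t w)}),
      (forall t, 0 <= t -> measurable_fun setT (W t)),
      (forall s t, 0 <= s -> s < t -> forall B : set R, measurable B ->
          P ((fun w => W t w - W s w) @^-1` B)
          = normal_prob 0 (Num.sqrt (t - s)) B) &
      (forall (n : nat) (ts : nat -> R) (B : nat -> set R),
          0 <= ts 0%N -> (forall i, (i < n)%N -> ts i < ts i.+1) ->
          (forall i, measurable (B i)) ->
          P (\bigcap_(i in [set i | (i < n)%N])
               ((fun w => W (ts i.+1) w - W (ts i) w) @^-1` B i))
          = \big[*%E/1%E]_(i < n)
               P ((fun w => W (ts i.+1) w - W (ts i) w) @^-1` B i))].

Definition natural_filtration (W : R -> Omega -> R) (t : R) : set (set Omega) :=
  smallest (sigma_algebra setT)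
    ([set A | exists s (B : set R), [/\ 0 <= s <= t, measurable B &
                                        A = W s @^-1` B]]
     `|` [set N | exists M, [/\ measurable M, P M = 0%E & N `<=` M]]).

Definition admissible (W : R -> Omega -> R) (u0 : R) (U : R -> Omega -> R) : Prop :=
  [/\ (forall t w, 0 <= t -> 0 <= U t w <= u0),
      (forall t, 0 <= t -> forall B : set R, measurable B ->
          natural_filtration W t (U t @^-1` B)) &
      measurable_fun ([set t : R | 0 <= t] `*` [set: Omega])
                     (fun p : R * Omega => U p.1 p.2)].

Definition surplus (W : R -> Omega -> R) (mu sigma : R) (U : R -> Omega -> R)
    (t : R) (w : Omega) : R :=
  mu * t + sigma * W t w - Rintegral lebesgue_measure `[0, t]%classic (fun s => U s w).

(* Running maximum with initial past maximum z. *)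
Definition running_max W mu sigma U (z t : R) (w : Omega) : R :=
  Num.max z (sup [set surplus W mu sigma U s w | s in `[0, t]%classic]).

Definition drawdown W mu sigma U (z t : R) (w : Omega) : R :=
  running_max W mu sigma U z t w - surplus W mu sigma U t w.

Definition performance W mu sigma r beta d U (z : R) : R :=
  Rintegral P setT (fun w =>
    beta * Rintegral lebesgue_measure `[0, +oo[%classic
             (fun t => expR (- (r * t)) * U t w)
    - Rintegral lebesgue_measure `[0, +oo[%classic
             (fun t => expR (- (r * t)) *
                       (if d < drawdown W mu sigma U z t w then 1 else 0))).

Definition value_fn W mu sigma u0 r beta d (z : R) : R :=
  sup [set performance W mu sigma r beta d U z | U in admissible W u0].

End dividend_drawdown.

From HB Require Import structures.
From mathcomp Require Import all_boot all_order all_algebra.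
From mathcomp Require Import all_classical all_reals all_analysis.
From mathcomp Require Import measurable_realfun ring lra.
Import Order.TTheory GRing.Theory Num.Theory.
Import numFieldNormedType.Exports.
Local Open Scope classical_set_scope.
Local Open Scope ring_scope.

(* The payoff of any strategy lies pathwise in [-1/r, beta u0/r], and paying
   at the maximal rate u0 already earns beta u0/r - 1/r; this gives the bounds.
   A larger past maximum z only enlarges the drawdown, so every performance,
   hence v, decreases in z.  For the limit, fix a horizon T: with probability
   close to 1 the uncontrolled path mu t + sigma W(t) stays below some level K
   on [0, T], and dividends only lower the surplus; so once z > K + d the
   drawdown exceeds d on all of [0, T] whatever the strategy, which costs at
   least (1 - e^{-rT})/r. *)

Section integral_without_measurability.
Context {d : measure_display} {T : measurableType d} {R : realType}
  (mu : {measure set T -> \bar R}).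
Local Open Scope ereal_scope.

(* The nonnegative integral is a supremum over the simple functions below the
   integrand, so none of these comparisons needs measurability; the payoff of a
   general strategy is not known to be measurable. *)
Lemma ge0_le_integral_subset (D1 D2 : set T) (f g : T -> \bar R) :
  (forall x, D1 x -> 0 <= f x) -> (forall x, D2 x -> 0 <= g x) ->
  D1 `<=` D2 -> (forall x, D1 x -> f x <= g x) ->
  \int[mu]_(x in D1) f x <= \int[mu]_(x in D2) g x.
Proof.
move=> f0 g0 D12 fg; rewrite !ge0_integralE//.
apply: ereal_sup_le => _ [h hf <-]; exists h => //= x.
apply: le_trans (hf x) _; rewrite /patch.
have [/set_mem D1x|_] := ifPn; first by rewrite ifT ?inE; [exact: fg|exact: D12].
by case: ifPn => // /set_mem /g0.
Qed.

Lemma ge0_Rintegral_le_subset (D1 D2 : set T) (f g : T -> R) :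
  (forall x, D1 x -> (0 <= f x)%R) -> (forall x, D2 x -> (0 <= g x)%R) ->
  D1 `<=` D2 -> (forall x, D1 x -> (f x <= g x)%R) ->
  \int[mu]_(x in D2) (g x)%:E \is a fin_num ->
  (Rintegral mu D1 f <= Rintegral mu D2 g)%R.
Proof.
move=> f0 g0 D12 fg gfin.
have le_fg : \int[mu]_(x in D1) (f x)%:E <= \int[mu]_(x in D2) (g x)%:E.
  by apply: ge0_le_integral_subset => // x Dx; rewrite lee_fin; auto.
apply: fine_le => //; rewrite ge0_fin_numE; last first.
  by apply: integral_ge0 => x /f0; rewrite lee_fin.
by apply: le_lt_trans le_fg _; rewrite -ge0_fin_numE// integral_ge0// => x /g0.
Qed.

Lemma bounded_integral_fin_num (f : T -> \bar R) (M : R) :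
  mu setT < +oo -> (0 <= M)%R -> (forall x, 0 <= f x <= M%:E) ->
  \int[mu]_(x in setT) f x \is a fin_num.
Proof.
move=> muT M0 fM; have f0 x : 0 <= f x by case/andP: (fM x).
have le_fM : \int[mu]_(x in setT) f x <= \int[mu]_(x in setT) (cst M%:E) x.
  by apply: ge0_le_integral_subset => // x _; case/andP: (fM x); rewrite ?lee_fin.
rewrite integral_cst// in le_fM; rewrite ge0_fin_numE ?integral_ge0//.
by apply: le_lt_trans le_fM _; rewrite lte_mul_pinfty// lee_fin.
Qed.

Lemma bounded_le_Rintegral (f g : T -> R) (M : R) :
  mu setT < +oo -> (0 <= M)%R ->
  (forall x, (`|f x| <= M)%R) -> (forall x, (`|g x| <= M)%R) ->
  (forall x, (f x <= g x)%R) ->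
  (Rintegral mu setT f <= Rintegral mu setT g)%R.
Proof.
move=> muT M0 fM gM fg.
have parts_fin (h : T -> R) : (forall x, (`|h x| <= M)%R) ->
    \int[mu]_(x in setT) ((EFin \o h)^\+ x) \is a fin_num /\
    \int[mu]_(x in setT) ((EFin \o h)^\- x) \is a fin_num.
  move=> /= hM; split; apply: (bounded_integral_fin_num _ _ muT M0) => x.
    by rewrite funeposE le_max lexx orbT ge_max !lee_fin M0 (le_trans (ler_norm _)).
  rewrite funenegE le_max lexx orbT ge_max !lee_fin M0 andbT.
  by move: (hM x); rewrite ler_norml lerNl => /andP[].
have [fp fn] := parts_fin _ fM; have [gp gn] := parts_fin _ gM.
have le_pos : \int[mu]_(x in setT) ((EFin \o f)^\+ x) <=
              \int[mu]_(x in setT) ((EFin \o g)^\+ x).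
  apply: ge0_le_integral_subset => // x _; rewrite ?funepos_ge0// !funeposE.
  by apply: le_max2; rewrite //= lee_fin.
have le_neg : \int[mu]_(x in setT) ((EFin \o g)^\- x) <=
              \int[mu]_(x in setT) ((EFin \o f)^\- x).
  apply: ge0_le_integral_subset => // x _; rewrite ?funeneg_ge0// !funenegE.
  by apply: le_max2; rewrite //= lee_fin lerN2.
rewrite /Rintegral (integralE _ _ (EFin \o f)) (integralE _ _ (EFin \o g)).
rewrite (fineB fp fn) (fineB gp gn).
by apply: lerD; [exact: fine_le|rewrite lerN2; exact: fine_le].
Qed.

End integral_without_measurability.

Definition discounted {R : realType} (r : R) (h : R -> R) : R :=
  Rintegral lebesgue_measure `[0, +oo[ (fun t => expR (- (r * t)) * h t).

Section discounted_integral.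
Context {R : realType} {r : R}.
Local Notation leb := (@lebesgue_measure R).
Hypothesis r_gt0 : 0 < r.

Lemma measurable_discount (D : set R) :
  measurable_fun D (EFin \o (fun t => expR (- (r * t)))).
Proof.
apply/measurable_EFinP; apply: measurable_funTS.
apply: continuous_measurable_fun => x.
apply: continuous_comp; last exact: continuous_expR.
by apply/continuousN/continuousM => //; exact: cst_continuous.
Qed.

Lemma ge0_integral_discountZl (D : set R) (c : R) : measurable D -> 0 <= c ->
  (\int[leb]_(t in D) (c * expR (- (r * t)))%:E
   = c%:E * \int[leb]_(t in D) (expR (- (r * t)))%:E)%E.
Proof.
move=> mD c0; under eq_integral do rewrite EFinM.
by apply: ge0_integralZl => //; exact: measurable_discount.
Qed.

Lemma integral_discount :
  (\int[leb]_(t in `[0%R, +oo[) (expR (- (r * t)))%:E = r^-1%:E)%E.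
Proof.
have pdfE : (\int[leb]_t (exponential_pdf r t)%:E =
    \int[leb]_(t in `[0%R, +oo[) (r * expR (- (r * t)))%:E)%E.
  rewrite [RHS]integral_mkcond; apply: eq_integral => t _.
  by rewrite /exponential_pdf /patch; case: ifPn => // _; rewrite mulNr.
have := integral_exponential_pdf r_gt0.
rewrite pdfE ge0_integral_discountZl ?ltW// => /(congr1 (fun X => r^-1%:E * X)%E).
by rewrite muleA -EFinM mulVf ?lt0r_neq0// mul1e mule1.
Qed.

Lemma integral_discount_itv0c (T : R) : 0 < T ->
  (\int[leb]_(t in `[0%R, T]) (expR (- (r * t)))%:E
   = ((1 - expR (- (r * T))) / r)%:E)%E.
Proof.
move=> T_gt0; have := exponential_prob_itv0c r T_gt0.
rewrite /exponential_prob -EFinB mulNr.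
have -> : (\int[leb]_(t in `[0%R, T]) (exponential_pdf r t)%:E =
    \int[leb]_(t in `[0%R, T]) (r * expR (- (r * t)))%:E)%E.
  apply: eq_integral => t; rewrite inE /= in_itv /= => /andP[t0 _].
  by rewrite exponential_pdfE// mulNr.
rewrite ge0_integral_discountZl ?ltW// => /(congr1 (fun X => r^-1%:E * X)%E).
by rewrite muleA -EFinM mulVf ?lt0r_neq0// mul1e => ->; rewrite -EFinM mulrC.
Qed.

Lemma discounted_cst (c : R) : 0 <= c -> discounted r (fun=> c) = c / r.
Proof.
move=> c0; rewrite /discounted /Rintegral.
under eq_integral do rewrite mulrC.
by rewrite ge0_integral_discountZl// integral_discount.
Qed.

Lemma integral_discounted_fin_num (h : R -> R) (c : R) :
  (forall t, 0 <= t -> 0 <= h t <= c) ->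
  (\int[leb]_(t in `[0%R, +oo[) (expR (- (r * t)) * h t)%:E)%E \is a fin_num.
Proof.
move=> hc; have c0 : 0 <= c by have /andP[/le_trans] := hc 0 (lexx 0); apply.
rewrite ge0_fin_numE; last first.
  apply: integral_ge0 => t; rewrite /= in_itv /= andbT => /hc /andP[h0 _].
  by rewrite lee_fin mulr_ge0 ?expR_ge0.
apply: (@le_lt_trans _ _ (\int[leb]_(t in `[0%R, +oo[) (c * expR (- (r * t)))%:E)%E).
  apply: ge0_le_integral_subset => // t;
    rewrite /= in_itv /= andbT lee_fin => /hc /andP[h0 hct].
  - by rewrite mulr_ge0 ?expR_ge0.
  - by rewrite mulr_ge0 ?expR_ge0.
  - by rewrite mulrC ler_wpM2r ?expR_ge0.
by rewrite ge0_integral_discountZl// integral_discount -EFinM ltry.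
Qed.

Lemma discounted_bounds (h : R -> R) (c : R) :
  (forall t, 0 <= t -> 0 <= h t <= c) -> 0 <= discounted r h <= c / r.
Proof.
move=> hc; have c0 : 0 <= c by have /andP[/le_trans] := hc 0 (lexx 0); apply.
rewrite Rintegral_ge0 /=; last first.
  by move=> t; rewrite /= in_itv /= andbT => /hc /andP[h0 _]; rewrite mulr_ge0 ?expR_ge0.
rewrite -discounted_cst//; apply: ge0_Rintegral_le_subset => //.
- by move=> t; rewrite /= in_itv /= andbT => /hc /andP[h0 _]; rewrite mulr_ge0 ?expR_ge0.
- by move=> t _; rewrite mulr_ge0 ?expR_ge0.
- by move=> t; rewrite /= in_itv /= andbT => /hc /andP[_ hc']; rewrite ler_wpM2l ?expR_ge0.
- by apply: (integral_discounted_fin_num _ c) => t _; rewrite lexx c0.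
Qed.

Lemma le_discounted (h1 h2 : R -> R) (c : R) :
  (forall t, 0 <= t -> 0 <= h1 t <= h2 t) -> (forall t, 0 <= t -> h2 t <= c) ->
  discounted r h1 <= discounted r h2.
Proof.
move=> h12 h2c.
have h20 t : 0 <= t -> 0 <= h2 t by move=> /h12 /andP[/le_trans]; apply.
apply: ge0_Rintegral_le_subset => //.
- by move=> t; rewrite /= in_itv /= andbT => /h12 /andP[h0 _]; rewrite mulr_ge0 ?expR_ge0.
- by move=> t; rewrite /= in_itv /= andbT => /h20 h0; rewrite mulr_ge0 ?expR_ge0.
- by move=> t; rewrite /= in_itv /= andbT => /h12 /andP[_ le]; rewrite ler_wpM2l ?expR_ge0.
- by apply: (integral_discounted_fin_num _ c) => t t0; rewrite h20 ?h2c.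
Qed.

Lemma discounted_ge_horizon (h : R -> R) (c T : R) : 0 < T ->
  (forall t, 0 <= t -> 0 <= h t <= c) -> (forall t, 0 <= t <= T -> 1 <= h t) ->
  (1 - expR (- (r * T))) / r <= discounted r h.
Proof.
move=> T_gt0 hc h1.
have -> : (1 - expR (- (r * T))) / r =
    Rintegral leb `[0, T] (fun t => expR (- (r * t))).
  by rewrite /Rintegral integral_discount_itv0c.
apply: ge0_Rintegral_le_subset => //.
- by move=> t; rewrite /= in_itv /= andbT => /hc /andP[h0 _]; rewrite mulr_ge0 ?expR_ge0.
- by move=> t; rewrite /= !in_itv /= => /andP[-> _].
- move=> t; rewrite /= in_itv /= => tT.
  by rewrite -[leLHS]mulr1 ler_wpM2l ?expR_ge0 ?h1.
- exact: integral_discounted_fin_num hc.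
Qed.

End discounted_integral.

Section grid.
Context {R : realType}.

Lemma grid_approx (t e : R) : 0 <= t -> 0 < e ->
  exists k m : nat, k%:R / m.+1%:R <= t /\ t - k%:R / m.+1%:R < e.
Proof.
move=> t0 e0; set m := Num.truncn e^-1; set k := Num.truncn (t * m.+1%:R).
exists k, m; have m_gt0 : 0 < m.+1%:R :> R by rewrite ltr0n.
have kt : k%:R <= t * m.+1%:R by rewrite truncn_le mulr_ge0.
have tk : t * m.+1%:R < k.+1%:R by exact: truncnS_gt.
have em : 1 < e * m.+1%:R.
  by rewrite -[ltLHS](mulfV (lt0r_neq0 e0)) ltr_pM2l//; exact: truncnS_gt.
split; first by rewrite ler_pdivrMr.
rewrite -(ltr_pM2r m_gt0) mulrBl divfK ?pnatr_eq0//.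
by rewrite -natr1 in tk; lra.
Qed.

Lemma continuous_le_on_grid (g : R -> R) (T K : R) :
  {within `[0, T], continuous g} ->
  (forall k m : nat, k%:R / m.+1%:R <= T -> g (k%:R / m.+1%:R) <= K) ->
  forall t, 0 <= t <= T -> g t <= K.
Proof.
move=> gc gK t /andP[t0 tT]; rewrite leNgt; apply/negP => Kgt.
have tA : `[0, T]%classic t by rewrite /= in_itv /= t0 tT.
move: gc => /subspace_continuousP /(_ t tA) /cvgr_gt /(_ _ Kgt) /nbhs_ballP[e /= e0 ge].
have [k [m [qt tq]]] := grid_approx t e t0 e0.
have q0 : 0 <= k%:R / m.+1%:R :> R by rewrite divr_ge0.
have qT := le_trans qt tT.
have /ge : ball t e (k%:R / m.+1%:R) by rewrite -ball_normE /= ger0_norm ?subr_ge0.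
rewrite /= in_itv /= q0 qT => /(_ isT).
by rewrite /= ltNge gK.
Qed.

End grid.

Section bounded_on_horizon.
Context {R : realType} {d : measure_display} {T : measurableType d}.
Variable P : probability T R.

Lemma nondecreasing_cover_prob_ge (B : nat -> set T) (eps : R) :
  (forall n, measurable (B n)) -> (forall n m, (n <= m)%N -> B n `<=` B m) ->
  \bigcup_n B n = setT -> 0 < eps -> exists N, ((1 - eps)%:E <= P (B N))%E.
Proof.
move=> mB ndB cover e0.
have ndB' : nondecreasing_seq B by move=> n m /ndB /subsetPset.
have := @nondecreasing_cvg_mu _ _ _ P B mB (bigcupT_measurable B mB) ndB'.
rewrite cover => cvgB.
have ndPB : nondecreasing_seq (P \o B).
  by move=> n m /ndB nm; apply: le_measure; rewrite ?inE.
have : ((1 - eps)%:E < limn (P \o B))%E.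
  rewrite (cvg_lim _ cvgB)//; apply: (@lt_le_trans _ _ 1%E); first by rewrite lte_fin; lra.
  by rewrite le_eqVlt; apply/orP; left; apply/eqP/esym; exact: probability_setT.
by move=> /(lte_lim ndPB (cvgP _ cvgB)) [N _ HN]; exists N; exact: HN N (leqnn N).
Qed.

Lemma Rintegral_prob_cst (c : R) : Rintegral P setT (fun=> c) = c.
Proof. by rewrite Rintegral_cst// [X in fine X](probability_setT P) mulr1. Qed.

Lemma le_Rintegral_prob (f g : T -> R) (a b : R) :
  (forall w, a <= f w <= b) -> (forall w, a <= g w <= b) -> (forall w, f w <= g w) ->
  Rintegral P setT f <= Rintegral P setT g.
Proof.
have norm_le h w : a <= h w <= b -> `|h w| <= `|a| + `|b|.
  move=> /andP[ah hb]; rewrite ler_norml.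
  have := ler_norm (- a); rewrite normrN.
  have := ler_norm b; have := normr_ge0 a; have := normr_ge0 b.
  by move=> *; apply/andP; split; lra.
move=> fab gab; apply: (bounded_le_Rintegral P _ _ (`|a| + `|b|)).
- exact: fin_num_fun_lty (fin_num_measure P).
- by rewrite addr_ge0.
- by move=> w; exact: norm_le.
- by move=> w; exact: norm_le.
Qed.

(* By continuity of the paths, X <= n on [0, H] as soon as it holds at the
   countably many grid times k / (m + 1), which makes the event measurable. *)
Lemma bounded_on_horizon_event (X : R -> T -> R) (H eps : R) :
  (forall w, {within `[0, +oo[, continuous (X ^~ w)}) ->
  (forall t, 0 <= t -> measurable_fun setT (X t)) -> 0 <= H -> 0 < eps ->
  exists (A : set T) (K : R), [/\ measurable A, ((1 - eps)%:E <= P A)%E &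
    forall w, A w -> forall t, 0 <= t <= H -> X t w <= K].
Proof.
move=> Xc Xm H0 e0.
pose q (k m : nat) : R := k%:R / m.+1%:R.
have q0 k m : 0 <= q k m by rewrite divr_ge0.
pose B (n : nat) : set T := \bigcap_m \bigcap_k
  (if q k m <= H then X (q k m) @^-1` `]-oo, n%:R] else setT).
have mB n : measurable (B n).
  apply: bigcapT_measurable => m; apply: bigcapT_measurable => k.
  case: ifPn => // _; rewrite -[X in measurable X]setTI.
  exact: Xm (q0 k m) measurableT _ (measurable_itv _).
have ndB n n' : (n <= n')%N -> B n `<=` B n'.
  move=> nn' w Bw m _ k _; have := Bw m I k I; case: ifPn => //= _.
  by rewrite !in_itv /= => /le_trans; apply; rewrite ler_nat.
have XcH w : {within `[0, H], continuous (X ^~ w)}.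
  by apply: continuous_subspaceW (Xc w) => t /=; rewrite !in_itv /= => /andP[->].
have cover : \bigcup_n B n = setT.
  apply/seteqP; split => // w _.
  have [c cH cmax] := EVT_max H0 (XcH w).
  exists (Num.truncn (X c w)).+1 => //= m _ k _; case: ifPn => //= qH.
  rewrite in_itv /=; apply: le_trans (cmax _ _) (ltW (truncnS_gt _)).
  by rewrite in_itv /= q0.
have [N PN] := nondecreasing_cover_prob_ge _ _ mB ndB cover e0.
exists (B N), N%:R; split => // w Bw t tH.
apply: continuous_le_on_grid (XcH w) _ t tH => k m qH.
by have := Bw m I k I; rewrite /q qH /= in_itv.
Qed.

End bounded_on_horizon.

Section drawdown_model.
Context {R : realType} {dO : measure_display} {Omega : measurableType dO}.
Variable P : probability Omega R.
Variables (W : R -> Omega -> R) (mu sigma u0 r beta d : R).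
Hypotheses (r_gt0 : 0 < r) (u0_ge0 : 0 <= u0) (beta_ge0 : 0 <= beta).

Definition breach U z w t : R := if d < drawdown W mu sigma U z t w then 1 else 0.

Definition payoff U z w : R :=
  beta * discounted r (fun t => U t w) - discounted r (breach U z w).

Lemma performanceE U z :
  performance P W mu sigma r beta d U z = Rintegral P setT (payoff U z).
Proof. by []. Qed.

Lemma breach01 U z w t : 0 <= breach U z w t <= 1.
Proof. by rewrite /breach; case: ifP; rewrite ?lexx ?ler01. Qed.

Lemma le_drawdown U z1 z2 t w : z1 <= z2 ->
  drawdown W mu sigma U z1 t w <= drawdown W mu sigma U z2 t w.
Proof. by move=> z12; rewrite /drawdown /running_max lerD2r le_max2. Qed.

Lemma le_breach U z1 z2 w t : z1 <= z2 -> breach U z1 w t <= breach U z2 w t.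
Proof.
move=> z12; rewrite /breach; case: ifPn => [dz1|_]; last by case: ifP; rewrite ?ler01.
by rewrite (lt_le_trans dz1 (le_drawdown _ _ _ _ _ z12)).
Qed.

Lemma lt_drawdown U z t w : (forall s, 0 <= s -> 0 <= U s w) -> 0 <= t ->
  mu * t + sigma * W t w + d < z -> d < drawdown W mu sigma U z t w.
Proof.
move=> U0 t0 lt_z; rewrite /drawdown /surplus.
have zM : z <= running_max W mu sigma U z t w by rewrite /running_max le_max lexx.
set I := Rintegral _ _ _.
have I0 : 0 <= I.
  by apply: Rintegral_ge0 => s; rewrite /= in_itv /= => /andP[/U0].
lra.
Qed.

Lemma payoff_bounds U z w : (forall t, 0 <= t -> 0 <= U t w <= u0) ->
  - r^-1 <= payoff U z w <= beta * u0 / r.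
Proof.
move=> Ub; have /andP[D0 Du] := discounted_bounds r_gt0 _ _ Ub.
have /andP[B0 B1] := discounted_bounds r_gt0 _ _ (fun t _ => breach01 U z w t).
have bD : beta * discounted r (fun t => U t w) <= beta * u0 / r.
  by rewrite -mulrA ler_wpM2l.
have := mulr_ge0 beta_ge0 D0; rewrite div1r in B1.
by rewrite /payoff => ?; apply/andP; split; lra.
Qed.

Let beta_u0_r_ge0 : 0 <= beta * u0 / r.
Proof. by apply: divr_ge0; [exact: mulr_ge0|exact: ltW]. Qed.

Let oppr_invr_le0 : - r^-1 <= 0.
Proof. by rewrite oppr_le0 invr_ge0 ltW. Qed.

Lemma performance_le U z : admissible P W u0 U ->
  performance P W mu sigma r beta d U z <= beta * u0 / r.
Proof.
case=> Ub _ _; rewrite performanceE -[leRHS](Rintegral_prob_cst P).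
apply: (le_Rintegral_prob P _ _ (- r^-1) (beta * u0 / r)) => w.
- exact: payoff_bounds (Ub ^~ w).
- by rewrite lexx andbT (le_trans oppr_invr_le0 beta_u0_r_ge0).
- by have /andP[] := payoff_bounds U z w (Ub ^~ w).
Qed.

Lemma performance_cst_ge z :
  (beta * u0 - 1) / r <= performance P W mu sigma r beta d (fun _ _ => u0) z.
Proof.
have u0b w t : 0 <= t -> 0 <= (fun _ _ => u0) t w <= u0 by rewrite lexx u0_ge0.
have lbE : (beta * u0 - 1) / r = beta * u0 / r - r^-1 by rewrite mulrBl div1r.
have := beta_u0_r_ge0; have := oppr_invr_le0.
move=> ? ?; rewrite performanceE lbE -[leLHS](Rintegral_prob_cst P).
apply: (le_Rintegral_prob P _ _ (- r^-1) (beta * u0 / r)) => w.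
- by apply/andP; split; lra.
- by apply: payoff_bounds => t; rewrite lexx u0_ge0.
- have /andP[_ B1] := discounted_bounds r_gt0 _ _ (fun t _ => breach01 (fun _ _ => u0) z w t).
  by rewrite /payoff discounted_cst// -mulrA; rewrite div1r in B1; lra.
Qed.

Lemma performance_antitone U z1 z2 : admissible P W u0 U -> z1 <= z2 ->
  performance P W mu sigma r beta d U z2 <= performance P W mu sigma r beta d U z1.
Proof.
case=> Ub _ _ z12; rewrite !performanceE.
apply: (le_Rintegral_prob P _ _ (- r^-1) (beta * u0 / r)) => w.
- exact: payoff_bounds (Ub ^~ w).
- exact: payoff_bounds (Ub ^~ w).
- rewrite /payoff lerD2l lerN2; apply: (le_discounted r_gt0 _ _ 1) => t _.
    by rewrite le_breach// andbT; have /andP[] := breach01 U z1 w t.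
  by have /andP[] := breach01 U z2 w t.
Qed.

Lemma performance_le_on_event U z T (A : set Omega) K :
  admissible P W u0 U -> 0 < T -> measurable A ->
  (forall w, A w -> forall t, 0 <= t <= T -> mu * t + sigma * W t w <= K) ->
  K + d < z ->
  performance P W mu sigma r beta d U z <=
    beta * u0 / r - (1 - expR (- (r * T))) / r * fine (P A).
Proof.
case=> Ub _ _ T_gt0 mA AK Kz; set c := (1 - expR (- (r * T))) / r.
have e1 : expR (- (r * T)) <= 1 by rewrite expR_le1 oppr_le0 mulr_ge0// ltW.
have c0 : 0 <= c by rewrite divr_ge0 ?subr_ge0// ltW.
have cr : c <= r^-1.
  by rewrite /c -[leRHS]div1r ler_pM2r ?invr_gt0// gerBl expR_ge0.
have intE : Rintegral P setT (fun w => beta * u0 / r - c * (\1_A w : R)) =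
    beta * u0 / r - c * fine (P A).
  rewrite RintegralB//; last 2 first.
  - exact: finite_measure_integrable_cst.
  - exact: integrableZl (integrable_indic P mA).
  rewrite Rintegral_prob_cst RintegralZl//; last exact: integrable_indic.
  by rewrite /Rintegral integral_indic// setIT.
have := beta_u0_r_ge0; have := oppr_invr_le0.
move=> ? ?; rewrite performanceE -intE.
apply: (le_Rintegral_prob P _ _ (- r^-1) (beta * u0 / r)) => w.
- exact: payoff_bounds (Ub ^~ w).
- by rewrite indicE; case: (w \in A); rewrite ?mulr1 ?mulr0; apply/andP; split; lra.
rewrite indicE; case: (boolP (w \in A)) => [/set_mem Aw|_]; last first.
  by rewrite mulr0 subr0; have /andP[] := payoff_bounds U z w (Ub ^~ w).
have /andP[D0 Du] := discounted_bounds r_gt0 _ _ (Ub ^~ w).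
have bD : beta * discounted r (fun t => U t w) <= beta * u0 / r.
  by rewrite -mulrA ler_wpM2l.
have : c <= discounted r (breach U z w).
  apply: (discounted_ge_horizon r_gt0 _ 1 T T_gt0) => [t _|t tT].
    exact: breach01.
  have /andP[t0 _] := tT; rewrite /breach ifT//.
  apply: lt_drawdown t0 _ => [s /(Ub s w) /andP[]//|].
  by have := AK w Aw t tT; lra.
by rewrite /payoff mulr1; lra.
Qed.

End drawdown_model.

Section value_function.
Context {R : realType} {dO : measure_display} {Omega : measurableType dO}.
Variable P : probability Omega R.
Variables (W : R -> Omega -> R) (mu sigma u0 r beta d : R).
Hypotheses (r_gt0 : 0 < r) (u0_ge0 : 0 <= u0) (beta_ge0 : 0 <= beta).
Local Notation v := (value_fn P W mu sigma u0 r beta d).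
Local Notation perf := (performance P W mu sigma r beta d).

Lemma admissible_cst c : 0 <= c <= u0 -> admissible P W u0 (fun _ _ => c).
Proof.
move=> cu0; split => [//|t _ B _|]; last exact: measurable_cst.
have [F0 FC _] := smallest_sigma_algebra setT
  ([set A | exists s (B : set R), [/\ 0 <= s <= t, measurable B & A = W s @^-1` B]]
   `|` [set N | exists M, [/\ measurable M, P M = 0%E & N `<=` M]]).
by rewrite preimage_cst; case: ifP => _ //; rewrite -(setD0 setT); exact: FC.
Qed.

Let performances z := [set perf U z | U in admissible P W u0].

Let performances_ub z : ubound (performances z) (beta * u0 / r).
Proof. by move=> _ [U aU <-]; exact: performance_le. Qed.

Let performances_neq0 z : performances z !=set0.
Proof.
exists (perf (fun _ _ => u0) z), (fun _ _ => u0) => //.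
by apply: admissible_cst; rewrite lexx u0_ge0.
Qed.

Lemma value_fn_le z : v z <= beta * u0 / r.
Proof. exact: ge_sup (performances_neq0 z) (performances_ub z). Qed.

Lemma le_value_fn U z : admissible P W u0 U -> perf U z <= v z.
Proof.
by move=> aU; apply: ub_le_sup; [exists (beta * u0 / r); exact: performances_ub|exists U].
Qed.

Lemma value_fn_ge z : (beta * u0 - 1) / r <= v z.
Proof.
have cst_adm : admissible P W u0 (fun _ _ => u0).
  by apply: admissible_cst; rewrite lexx u0_ge0.
by apply: le_trans _ (le_value_fn _ _ cst_adm); exact: performance_cst_ge.
Qed.

Lemma value_fn_antitone z1 z2 : z1 <= z2 -> v z2 <= v z1.
Proof.
move=> z12; apply: ge_sup (performances_neq0 z2) _ => _ [U aU <-].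
apply: le_trans _ (le_value_fn _ _ aU); move: aU z12; exact: performance_antitone.
Qed.

Lemma value_fn_le_horizon delta :
  (forall w, {within `[0, +oo[, continuous (W ^~ w)}) ->
  (forall t, 0 <= t -> measurable_fun setT (W t)) -> 0 < delta < 1 ->
  exists K, forall z, K < z -> v z <= beta * u0 / r - (1 - delta) ^+ 2 / r.
Proof.
move=> Wc Wm /andP[delta_gt0 delta_lt1].
pose T := ln delta^-1 / r.
have T_gt0 : 0 < T by rewrite divr_gt0// ln_gt0// invf_gt1.
have eT : expR (- (r * T)) = delta.
  by rewrite /T mulrC divfK ?lt0r_neq0// expRN lnK ?invrK// posrE invr_gt0.
pose X t w := mu * t + sigma * W t w.
have Xc w : {within `[0, +oo[, continuous (X ^~ w)}.
  apply/subspace_continuousP => t t0; apply: cvgD.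
    by apply: cvg_within_filter; apply: cvgMl_tmp; exact: cvg_id.
  by apply: cvgMl_tmp; move/subspace_continuousP: (Wc w); apply.
have Xm t : 0 <= t -> measurable_fun setT (X t).
  move=> t0; apply: measurable_funD; first exact: measurable_cst.
  by apply: measurable_funM; [exact: measurable_cst|exact: Wm].
have [A [K [mA PA AK]]] := bounded_on_horizon_event P _ T _ Xc Xm (ltW T_gt0) delta_gt0.
have PA_ge : 1 - delta <= fine (P A) by rewrite -lee_fin fineK ?fin_num_measure.
exists (K + d) => z Kz; apply: ge_sup (performances_neq0 z) _ => _ [U aU <-].
apply: le_trans (performance_le_on_event P W mu sigma u0 r beta d r_gt0 u0_ge0 beta_ge0
  U z T A K aU T_gt0 mA AK Kz) _.
rewrite eT lerD2l lerN2 expr2 mulrAC ler_wpM2l// divr_ge0 ?subr_ge0 ?ltW//.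
Qed.

Lemma value_fn_eventually_le eps :
  (forall w, {within `[0, +oo[, continuous (W ^~ w)}) ->
  (forall t, 0 <= t -> measurable_fun setT (W t)) -> 0 < eps ->
  exists K, forall z, K < z -> v z <= (beta * u0 - 1) / r + eps.
Proof.
move=> Wc Wm eps_gt0; pose delta := Num.min (eps * r / 2) (1 / 2).
have delta_gt0 : 0 < delta by rewrite lt_min !divr_gt0 ?mulr_gt0.
have delta_eps : delta <= eps * r / 2 by rewrite ge_min lexx.
have delta_half : delta <= 1 / 2 by rewrite ge_min lexx orbT.
have [|K vK] := value_fn_le_horizon delta Wc Wm.
  by rewrite delta_gt0 (le_lt_trans delta_half)//; lra.
exists K => z /vK /le_trans; apply.
have k1 : 2 * delta * r^-1 <= eps.
  by rewrite -ler_pdivlMr ?invr_gt0// invrK; lra.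
have k2 : 0 <= delta * delta * r^-1 by rewrite !mulr_ge0 ?invr_ge0 ?ltW.
have -> : (1 - delta) ^+ 2 / r = r^-1 - 2 * delta * r^-1 + delta * delta * r^-1.
  by rewrite expr2; ring.
by rewrite mulrBl div1r; lra.
Qed.

End value_function.

Theorem lemma1p1 (R : realType) (dO : measure_display) (Omega : measurableType dO)
    (P : probability Omega R) (W : R -> Omega -> R)
    (mu sigma u0 r beta d : R) :
  measure_is_complete P ->
  std_brownian_motion P W ->
  0 < sigma -> 0 < u0 -> 0 < r -> 0 < beta -> 0 < d ->
  let v := value_fn P W mu sigma u0 r beta d in
  [/\ (forall z1 z2, 0 <= z1 -> z1 <= z2 -> v z2 <= v z1),
      (forall z, 0 <= z -> (beta * u0 - 1) / r <= v z <= beta * u0 / r) &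
      v z @[z --> +oo] --> (beta * u0 - 1) / r].
Proof.
move=> _ [_ Wc Wm _ _] _ u0_gt0 r_gt0 beta_gt0 _ v; rewrite {}/v.
have u0_ge0 := ltW u0_gt0; have beta_ge0 := ltW beta_gt0.
split => [z1 z2 _|z _|].
- exact: value_fn_antitone.
- by rewrite value_fn_ge ?value_fn_le.
apply/cvgrPdist_le => eps eps_gt0.
have [K vK] :=
  value_fn_eventually_le P W mu sigma u0 r beta d r_gt0 u0_ge0 beta_ge0 eps Wc Wm eps_gt0.
exists K; split => [|z Kz]; first exact: num_real.
by rewrite distrC ger0_norm ?subr_ge0 ?value_fn_ge// lerBlDl vK.
Qed.
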